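(* The continuum $|\mathbb G|$ is indecomposable.
   Context: A graph is a pair $A=(V(A),E(A))$ with $E(A)\subseteq V(A)^2$ reflexive and symmetric; a topological graph additionally has $V$ compact, second countable, zero-dimensional and $E$ closed. Epimorphisms are (continuous) edge-preserving maps surjective on vertices and edges. A vertex set $S$ is disconnected if it splits into two nonempty closed subsets with no edges between them; otherwise connected; components are maximal connected subsets. An epimorphism $f\colon A\to B$ is confluent if for every connected $Q\subseteq V(B)$ each component $C$ of $f^{-1}(Q)$ has $f(C)=Q$. $\mathbb G$ is the projective Fraïssé limit of the class of finite connected graphs with confluent epimorphisms, i.e. the unique topological graph such that (1) every finite connected graph is a confluent epimorphic image of $\mathbb G$; (2) for finite connected $A,B$ and confluent epimorphisms $f\colon\mathbb G\to A$, $g\colon B\to A$ there is a confluent epimorphism $h\colon\mathbb G\to B$ with $f=g\circ h$; (3) for each $\varepsilon>0$ some confluent epimorphism from $\mathbb G$ onto a finite connected graph has all point-preimages of diameter $<\varepsilon$. The edge relation of $\mathbb G$ is an equivalence relation and $|\mathbb G|=V(\mathbb G)/E(\mathbb G)$ (quotient topology) is its topological realization. A continuum is indecomposable if it is not the union of two proper subcontinua. *)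

From HB Require Import structures.
From Stdlib Require Import Relation_Operators.
From mathcomp Require Import all_boot all_order all_algebra.
From mathcomp Require Import generic_quotient.
Local Open Scope quotient_scope.
From mathcomp Require Import all_classical all_reals all_analysis.

Set Implicit Arguments.
Unset Strict Implicit.
Unset Printing Implicit Defensive.

Local Open Scope classical_set_scope.
Local Open Scope ring_scope.
Local Open Scope quotient_scope.

(* [cl] is the notion of "closed set" of the ambient vertex space:
   [closed] for topological graphs, [fun _ => True] for finite (discrete) graphs. *)
Definition gdisconnected {X : Type} (cl : set X -> Prop)
    (E : X -> X -> Prop) (S : set X) : Prop :=
  exists P Q : set X,
    [/\ P `|` Q = S, P `&` Q = set0, P !=set0 & Q !=set0] /\
    [/\ (exists2 C, cl C & P = S `&` C),
        (exists2 C, cl C & Q = S `&` C) &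
        (forall p q, P p -> Q q -> ~ E p q)].

Definition gconnected {X : Type} (cl : set X -> Prop)
    (E : X -> X -> Prop) (S : set X) : Prop :=
  ~ gdisconnected cl E S.

Definition gcomponent {X : Type} (cl : set X -> Prop)
    (E : X -> X -> Prop) (S C : set X) : Prop :=
  [/\ C `<=` S, gconnected cl E C &
      forall D, C `<=` D -> D `<=` S -> gconnected cl E D -> D = C].

Definition epimorphism {X Y : Type} (EX : X -> X -> Prop) (EY : Y -> Y -> Prop)
    (f : X -> Y) : Prop :=
  [/\ (forall x y, EX x y -> EY (f x) (f y)),
      (forall b, exists x, f x = b) &
      (forall a b, EY a b -> exists x y, [/\ EX x y, f x = a & f y = b])].

Definition confluent {X Y : Type}
    (clX : set X -> Prop) (EX : X -> X -> Prop)
    (clY : set Y -> Prop) (EY : Y -> Y -> Prop) (f : X -> Y) : Prop :=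
  forall Q : set Y, gconnected clY EY Q ->
  forall C : set X, gcomponent clX EX (f @^-1` Q) C -> f @` C = Q.

Definition discrete_closed_sets {T : Type} : set T -> Prop := fun _ => True.

Definition fin_conn_graph (T : finType) (e : rel T) : Prop :=
  [/\ (0 < #|T|)%N, reflexive e, symmetric e &
      gconnected discrete_closed_sets e setT].

Definition top_graph (V : topologicalType) (E : V -> V -> Prop) : Prop :=
  [/\ compact [set: V], @second_countable V & zero_dimensional V] /\
  [/\ closed [set p : V * V | E p.1 p.2],
      (forall x, E x x) & (forall x y, E x y -> E y x)].

Definition cont_to_fin {V : topologicalType} {T : finType} (f : V -> T) : Prop :=
  forall a : T, open (f @^-1` [set a]).

Definition conf_epi_top {V : topologicalType} (E : V -> V -> Prop)
    {T : finType} (e : rel T) (f : V -> T) : Prop :=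
  [/\ cont_to_fin f, epimorphism E e f &
      confluent closed E discrete_closed_sets e f].

Definition conf_epi_fin {T1 T2 : finType} (e1 : rel T1) (e2 : rel T2)
    (g : T1 -> T2) : Prop :=
  epimorphism e1 e2 g /\
  confluent discrete_closed_sets e1 discrete_closed_sets e2 g.

(* (1)-(3): V with edge relation E is the projective Fraisse limit G *)
Definition is_G (R : realType) (V : pseudoMetricType R) (E : V -> V -> Prop) : Prop :=
  [/\ top_graph E,
      (forall (T : finType) (e : rel T), fin_conn_graph e ->
         exists f : V -> T, conf_epi_top E e f),
      (forall (A B : finType) (eA : rel A) (eB : rel B) (f : V -> A) (g : B -> A),
         fin_conn_graph eA -> fin_conn_graph eB ->
         conf_epi_top E eA f -> conf_epi_fin eB eA g ->
         exists h : V -> B, conf_epi_top E eB h /\ f = g \o h) &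
      (forall eps : R, 0 < eps ->
         exists (T : finType) (e : rel T) (f : V -> T),
           [/\ fin_conn_graph e, conf_epi_top E e f &
               forall x y, f x = f y -> ball x eps y])].

(* quotient by the equivalence relation generated by E (which is E itself
   when E is an equivalence relation, as it is for G) *)
Section Realization.
Variables (V : topologicalType) (E : V -> V -> Prop).

Definition Eclos (x y : V) : bool := `[< clos_refl_sym_trans V E x y >].

Lemma Eclos_refl : reflexive Eclos.
Proof. by move=> x; apply/asboolP; apply: rst_refl. Qed.

Lemma Eclos_sym : symmetric Eclos.
Proof.
by move=> x y; apply/asboolP/asboolP => H; apply: rst_sym.
Qed.

Lemma Eclos_trans : transitive Eclos.
Proof.
move=> y x z /asboolP H1 /asboolP H2; apply/asboolP.
exact: (rst_trans _ _ _ _ _ H1 H2).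
Qed.

Definition Eclos_equiv := EquivRel Eclos Eclos_refl Eclos_sym Eclos_trans.

Definition realization : topologicalType :=
  quotient_topology {eq_quot Eclos_equiv}.
End Realization.

Definition continuum (X : topologicalType) : Prop :=
  [/\ hausdorff_space X, [set: X] !=set0, compact [set: X] & connected [set: X]].

Definition subcontinuum {X : topologicalType} (A : set X) : Prop :=
  [/\ A !=set0, compact A & connected A].

Definition indecomposable_continuum (X : topologicalType) : Prop :=
  continuum X /\
  forall A B : set X, subcontinuum A -> subcontinuum B ->
    A `|` B = [set: X] -> A = [set: X] \/ B = [set: X].

(* If x E y E z but not x E z, a fine confluent map f sends x, y, z to a path
   a - b - c with no edge a - c.  By property (2), lift f through two copies of
   its target, one without the edges at a and one without the edges at c,
   joined at every vertex: the lifted edges x-y and y-z must then lie in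
   different copies although they share the lift of y.  So E is a closed equivalence relation on a compact metric space, and
   |G| = V/E is compact Hausdorff; it is connected because a clopen saturated set
   would disconnect a fine finite image of V.
   If |G| = A u B with proper subcontinua A and B, pick x_a outside A and x_b
   outside B, take f so fine that the fibres over f(x_a) and f(x_b) miss A and B
   respectively, and lift f through two copies of its target glued only at
   f(x_a).  The image of the preimage of A is graph-connected and avoids the
   glue, yet it contains both copies of f(x_b), whose fibres lie outside B and
   hence inside A. *)

From Stdlib Require Import Relation_Operators.
From mathcomp Require Import all_boot all_order all_algebra.
From mathcomp Require Import generic_quotient.
From mathcomp Require Import all_classical all_reals all_analysis.

Set Implicit Arguments.
Unset Strict Implicit.
Unset Printing Implicit Defensive.

Import Order.TTheory GRing.Theory Num.Theory.
Local Open Scope classical_set_scope.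
Local Open Scope ring_scope.
Local Open Scope quotient_scope.

Section DiscreteConnectivity.
Variables (T : Type) (e : T -> T -> Prop).

Lemma gconnected_set1 (cl : set T -> Prop) x : gconnected cl e [set x].
Proof.
move=> [P [Q [[PQ PQ0 [p Pp] [q Qq]] _]]].
have xp : p = x by have : [set x] p by rewrite -PQ; left.
have xq : q = x by have : [set x] q by rewrite -PQ; right.
have : (P `&` Q) x by split; [rewrite -xp | rewrite -xq].
by rewrite PQ0.
Qed.

Lemma gconnected_discreteP (Q : set T) :
  gconnected discrete_closed_sets e Q <->
  forall S, S `<=` Q -> S !=set0 ->
    (forall p q, S p -> Q q -> e p q -> S q) -> S = Q.
Proof.
split=> [cQ S SQ [s Ss] Sadj | Qmin].
  apply: contrapT => SnQ; apply: cQ.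
  have [q [Qq nSq]] : exists q, Q q /\ ~ S q.
    apply: contrapT => /forallNP nQS; apply: SnQ; apply/seteqP; split => // x Qx.
    by apply: contrapT => nSx; apply: (nQS x).
  exists S, (Q `\` S); split; split.
  - by apply/seteqP; split => [x [/SQ|[]]//|x Qx]; have [|] := pselect (S x); [left|right].
  - by apply/seteqP; split => x // [? []].
  - by exists s.
  - by exists q.
  - by exists S => //; apply/seteqP; split => [x Sx|x []//]; split => //; exact: SQ.
  - by exists (~` S).
  - by move=> p r Sp [Qr nSr] epr; exact/nSr/(Sadj p r).
move=> [P [P' [[PP' PP'0 neP [p' P'p']] [_ _ noE]]]].
have PQ : P = Q.
  apply: Qmin => [x Px|//|p q Pp Qq epq]; first by rewrite -PP'; left.
  have : (P `|` P') q by rewrite PP'.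
  by case=> // P'q; case: (noE _ _ Pp P'q epq).
have : (P `&` P') p' by split; rewrite // PQ -PP'; right.
by rewrite PP'0.
Qed.

Lemma gcomponent_neq0 (cl : set T -> Prop) (S C : set T) x :
  gcomponent cl e S C -> S x -> C !=set0.
Proof.
move=> [CS _ Cmax] Sx; apply/set0P/eqP => C0.
have x1 : [set x] = C.
  by apply: Cmax => [|y ->//|]; [rewrite C0 | exact: gconnected_set1].
by move: C0; rewrite -x1 => /seteqP[/(_ x erefl)].
Qed.

Lemma gcomponent_adj (S C : set T) x y : (forall a b, e a b -> e b a) ->
  gcomponent discrete_closed_sets e S C -> C x -> S y -> e x y -> C y.
Proof.
move=> esym [CS /gconnected_discreteP Cmin Cmax] Cx Sy exy.
suff <- : C `|` [set y] = C by right.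
apply: Cmax => [|z [/CS|->]//|]; first exact: subsetUl.
apply/gconnected_discreteP => D DCy [d Dd] Dadj.
have DIC z : (D `&` C) z -> C `<=` D.
  move=> DCz; rewrite -(Cmin (D `&` C)) ?subIsetl //; first by exists z.
  by move=> p q [Dp _] Cq epq; split=> //; apply: (Dadj p) => //; left.
have CD : C `<=` D.
  case: (DCy d Dd) => [Cd|dy]; first exact: (DIC d).
  apply: (DIC x); split=> //; apply: (Dadj d) => //; first by left.
  by rewrite dy; exact: esym.
apply/seteqP; split=> // z [/CD //|->].
by apply: (Dadj x) => //; [exact: CD | right].
Qed.
End DiscreteConnectivity.

Section DoubleGraph.
Variables (T : finType) (e : rel T) (keep : bool -> rel T) (link : pred T).

Definition double : rel (T * bool) := fun x y =>
  if x.2 == y.2 then e x.1 y.1 && keep x.2 x.1 y.1 else (x.1 == y.1) && link x.1.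

Lemma double_edge_layer x y :
  double x y -> x.1 != y.1 -> x.2 = y.2 /\ keep x.2 x.1 y.1.
Proof.
rewrite /double; case: eqP => [-> /andP[]//|_ /andP[/eqP-> _]].
by rewrite eqxx.
Qed.

Lemma double_edge_switch x y : double x y -> x.2 != y.2 -> link x.1.
Proof. by move=> + /negbTE ij; rewrite /double ij => /andP[]. Qed.

Lemma double_layers_gdisconnected (S : set (T * bool)) :
  (forall x, S x -> ~~ link x.1) -> (exists2 x, S x & x.2) ->
  (exists2 x, S x & ~~ x.2) -> gdisconnected discrete_closed_sets double S.
Proof.
move=> Snl [x Sx x2] [y Sy y2].
pose L (i : bool) := [set z : T * bool | z.2 = i].
exists (S `&` L true), (S `&` L false); split; split.
- by rewrite -setIUr; apply: setIidl => -[p []] _; [left|right].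
- by apply/seteqP; split=> // -[p i]; rewrite /L => -[[_ /= ->] []].
- by exists x; split=> //; apply/eqP.
- by exists y; split=> //; apply/eqP; rewrite eqbF_neg.
- by exists (L true).
- by exists (L false).
move=> p q [Sp p2] [_ q2] /double_edge_switch; rewrite /L /= in p2 q2.
by rewrite p2 q2 => /(_ isT); apply/negP/Snl.
Qed.

Lemma double_vertical p i : link p -> double (p, i) (p, ~~ i).
Proof. by rewrite /double /= eqxx; case: i. Qed.

Hypotheses (conn_e : fin_conn_graph e) (keep_sym : forall i, symmetric (keep i))
  (keep_refl : forall i, reflexive (keep i))
  (keep_cover : forall i p q, e p q -> keep i p q || link p && keep (~~ i) p q).

Lemma double_sym : symmetric double.
Proof.
case: conn_e => _ _ esym _ [p i] [q j]; rewrite /double /= [j == i]eq_sym.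
case: eqP => [->|_]; first by rewrite esym keep_sym.
by case: (eqVneq p q) => [->|]; rewrite ?andbF.
Qed.

Lemma double_fst_image (Q : set T) (X : set (T * bool)) :
  gconnected discrete_closed_sets e Q -> X `<=` fst @^-1` Q -> X !=set0 ->
  (forall x y, X x -> Q y.1 -> double x y -> X y) -> fst @` X = Q.
Proof.
move=> /gconnected_discreteP Qmin XQ [x0 Xx0] Xadj; apply: Qmin.
- by move=> _ [x Xx <-]; exact: XQ.
- by exists x0.1, x0.
move=> _ q [[p i] Xpi <-] Qq /= epq.
have Qp : Q p := XQ _ Xpi.
case/orP: (keep_cover i epq) => [kpq|/andP[lp kpq]].
  by exists (q, i) => //; apply: (Xadj (p, i)); rewrite // /double /= eqxx epq.
have Xpi' : X (p, ~~ i) by apply: (Xadj (p, i)); last exact: double_vertical.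
by exists (q, ~~ i) => //; apply: (Xadj (p, ~~ i)); rewrite // /double /= eqxx epq.
Qed.

Lemma double_fin_conn : (exists p, link p) -> fin_conn_graph double.
Proof.
move=> [p0 lp0]; case: (conn_e) => T0 e_refl _ eT; split.
- by rewrite card_prod card_bool muln_gt0 T0.
- by move=> [p i]; rewrite /double /= eqxx e_refl keep_refl.
- exact: double_sym.
have fstT (X : set (T * bool)) : X !=set0 ->
    (forall x y, X x -> double x y -> X y) -> fst @` X = setT.
  by move=> X0 Xadj; apply: double_fst_image => // x y Xx _; exact: Xadj.
apply/gconnected_discreteP => S _ S0 Sadj.
have Sclosed x y : S x -> double x y -> S y by move=> Sx; exact: Sadj.
apply/eqP; apply: contrapT => /negP/setTPn S'0.
have S'closed x y : ~ S x -> double x y -> ~ S y.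
  by move=> nSx dxy Sy; apply/nSx/(Sclosed y); rewrite // double_sym.
have [[p i] Spi /= pE] : (fst @` S) p0 by rewrite fstT.
have [[q j] nSqj /= qE] : (fst @` (~` S)) p0 by rewrite fstT.
move: Spi nSqj; rewrite pE qE => Spi; apply.
have [<-//|/negPf ij] := eqVneq i j.
by apply: (Sclosed (p0, i)) => //; rewrite /double /= ij eqxx.
Qed.

Lemma double_conf : conf_epi_fin double e fst.
Proof.
case: (conn_e) => _ e_refl _ _; split; first split.
- move=> [p i] [q j]; rewrite /double /=; case: ifP => _; first by case/andP.
  by case/andP => /eqP -> _; exact: e_refl.
- by move=> p; exists (p, false).
- move=> p q epq; case/orP: (keep_cover false epq) => [kpq|/andP[_ kpq]].
    by exists (p, false), (q, false); rewrite /double /= epq kpq.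
  by exists (p, true), (q, true); rewrite /double /= epq kpq.
move=> Q Qconn C Ccomp.
have [[q0 Qq0]|nQ] := pselect (Q !=set0); last first.
  case: Ccomp => CS _ _; apply/seteqP; split=> [_ [x Cx <-]|q Qq]; first exact: CS.
  by case: nQ; exists q.
apply: double_fst_image => //; first by case: Ccomp.
  exact: (gcomponent_neq0 (x := (q0, false))) Ccomp _.
move=> x y Cx Qy dxy; apply: (gcomponent_adj _ Ccomp) dxy => //.
by move=> a b; rewrite double_sym.
Qed.

End DoubleGraph.

Lemma zero_dimensional_hausdorff (T : topologicalType) :
  zero_dimensional T -> hausdorff_space T.
Proof.
move=> zT; rewrite open_hausdorff => x y xy.
have [U [[oU cU] Ux nUy]] := zT _ _ xy.
exists (U, ~` U); first by split; rewrite inE.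
by split=> //=; [exact: closed_openC | rewrite setICr].
Qed.

Lemma closed_nbhsC (T : topologicalType) (A : set T) x :
  closed A -> ~ A x -> nbhs x (~` A).
Proof. by move=> cA nAx; apply: open_nbhs_nbhs; split=> //; exact: closed_openC. Qed.

Lemma closed_rel_image (T : topologicalType) (E : T -> T -> Prop) (C : set T) :
  compact [set: T] -> hausdorff_space T -> closed [set p : T * T | E p.1 p.2] ->
  closed C -> closed [set y | exists2 x, C x & E x y].
Proof.
move=> cT hT cE cC.
have -> : [set y | exists2 x, C x & E x y] =
    snd @` ((C `*` setT) `&` [set p : T * T | E p.1 p.2]).
  apply/seteqP; split=> [y [x Cx Exy]|_ [[x y] [[Cx _] Exy] <-]]; last by exists x.
  by exists (x, y).
apply: compact_closed hT _; apply: continuous_compact.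
  by apply: continuous_subspaceT => p; exact: cvg_snd.
apply: compact_closedI => //; apply: compact_setX => //.
exact: subclosed_compact cC cT _.
Qed.

Lemma gconnected_image (X : topologicalType) (E : X -> X -> Prop)
    (T : finType) (e : rel T) (h : X -> T) (K : set X) :
  cont_to_fin h -> (forall x y, E x y -> e (h x) (h y)) ->
  gconnected closed E K -> gconnected discrete_closed_sets e (h @` K).
Proof.
move=> ch he Kconn [P [P' [[PP' PP'0 [p Pp] [q P'q]] [_ _ noE]]]]; apply: Kconn.
have closed_preimage (S : set T) : closed (h @^-1` S).
  rewrite -openC preimage_setC.
  have -> : h @^-1` (~` S) = \bigcup_(a in ~` S) h @^-1` [set a].
    by apply/seteqP; split=> [x nSx|x [a nSa /= ->]]; first by exists (h x).
  by apply: bigcup_open => a _; exact: ch.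
have preimage_neq0 (S : set T) t : S `<=` h @` K -> S t -> K `&` h @^-1` S !=set0.
  by move=> SK /[dup] /SK[x Kx <-] Shx; exists x.
exists (K `&` h @^-1` P), (K `&` h @^-1` P'); split; split.
- by rewrite -setIUr -preimage_setU PP'; apply: setIidl => x Kx; exists x.
- by rewrite setIACA setIid -preimage_setI PP'0 preimage_set0 setI0.
- by apply: (preimage_neq0 _ p) => // t Pt; rewrite -PP'; left.
- by apply: (preimage_neq0 _ q) => // t P't; rewrite -PP'; right.
- by exists (h @^-1` P).
- by exists (h @^-1` P').
- by move=> a b [_ Pa] [_ P'b] /he; exact: noE.
Qed.

Section CompactPseudoMetric.
Variables (R : realType) (V : pseudoMetricType R).

Lemma closed_disjoint_far (P Q : set V) : compact [set: V] ->
  closed P -> closed Q -> P `&` Q = set0 ->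
  \forall eps \near (0 : R)^'+, forall y z, P y -> Q z -> ~ ball y eps z.
Proof.
move=> /compact_near_coveringP cV cP cQ PQ0.
suff : \forall eps \near (0 : R)^'+,
    [set: V] `<=` (fun y => forall z, P y -> Q z -> ~ ball y eps z).
  by apply: filterS => eps far y z; exact: far.
apply: cV => x _.
have [d d0 Hd] : exists2 d : R, 0 < d & ball x d `<=` ~` P \/ ball x d `<=` ~` Q.
  have [Px|nPx] := pselect (P x).
    have nQx : ~ Q x by move=> Qx; have : (P `&` Q) x by []; rewrite PQ0.
    by have /nbhs_ballP[d d0 Hd] := closed_nbhsC cQ nQx; exists d => //; right.
  by have /nbhs_ballP[d d0 Hd] := closed_nbhsC cP nPx; exists d => //; left.
have d20 : 0 < d / 2 by rewrite divr_gt0.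
near=> y eps => z Py Qz byz.
have bxy : ball x (d / 2) y by near: y; exact: near_ball.
have epsd : eps < d / 2 by near: eps; exact: nbhs_right_lt.
have bxz : ball x d z.
  by rewrite (splitr d); apply: (ball_triangle bxy); exact: le_ball (ltW epsd) _ byz.
case: Hd => Hd; last exact: Hd bxz Qz.
by apply: (Hd y) Py; apply: le_ball bxy; rewrite ler_pdivrMr // ler_pMr // ler1n.
Unshelve. all: by end_near.
Qed.

Lemma not_rel_near (E : V -> V -> Prop) x z :
  closed [set p : V * V | E p.1 p.2] -> ~ E x z ->
  \forall eps \near (0 : R)^'+, forall p q, ball x eps p -> ball z eps q -> ~ E p q.
Proof.
move=> cE nExz; have /nbhs_ballP[d d0 Hd] := closed_nbhsC (x := (x, z)) cE nExz.
near=> eps => p q bxp bzq.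
have epsd : eps <= d by near: eps; exact: nbhs_right_ltW.
by apply: (Hd (p, q)); split; [exact: le_ball epsd _ bxp | exact: le_ball epsd _ bzq].
Unshelve. all: by end_near.
Qed.

End CompactPseudoMetric.

Section Realization.
Variables (R : realType) (V : pseudoMetricType R) (E : V -> V -> Prop).
Hypotheses (cV : compact [set: V]) (hV : hausdorff_space V)
  (cE : closed [set p : V * V | E p.1 p.2]) (Er : forall x, E x x)
  (Es : forall x y, E x y -> E y x) (Et : forall x y z, E x y -> E y z -> E x z).

Local Notation Q := (realization E).
Local Notation pi := (\pi_Q : V -> Q).

Definition saturated (S : set V) := forall x y, S x -> E x y -> S y.

Lemma EclosP x y : Eclos E x y <-> E x y.
Proof.
split=> [/asboolP|Exy]; last by apply/asboolP; exact: rst_step.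
by elim=> [//|//|a b _|a b c _ Eab _ Ebc]; [exact: Es | exact: Et Eab Ebc].
Qed.

Lemma piP x y : pi x = pi y <-> E x y.
Proof. by split=> [/eqquotP/EclosP|/EclosP Exy]; last apply/eqquotP. Qed.

Lemma preimage_repr (A : set Q) q : (pi @^-1` A) (repr q) = A q.
Proof. by rewrite -[in RHS](reprK q). Qed.

Lemma saturated_preimage (A : set Q) : saturated (pi @^-1` A).
Proof. by move=> x y; rewrite /preimage /= => Ax /piP <-. Qed.

Lemma image_piP (S : set V) x : saturated S -> (pi @` S) (pi x) <-> S x.
Proof. by move=> Ssat; split=> [[y Sy /piP]|Sx]; [exact: Ssat | exists x]. Qed.

Lemma preimage_image_pi (S : set V) : saturated S -> pi @^-1` (pi @` S) = S.
Proof. by move=> Ssat; apply/seteqP; split=> x /image_piP; apply. Qed.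

Lemma open_realization (A : set Q) : open A <-> open (pi @^-1` A).
Proof. by []. Qed.

Lemma closed_realization (A : set Q) : closed A <-> closed (pi @^-1` A).
Proof. by rewrite -openC -[closed (pi @^-1` A)]openC preimage_setC. Qed.

Lemma closed_class x : closed (E x).
Proof.
have -> : E x = [set y | exists2 u, [set x] u & E u y].
  by apply/seteqP; split=> [y|y [_ -> //]]; exists x.
apply: closed_rel_image => //.
exact: @accessible_closed_set1 _ (hausdorff_accessible hV) x.
Qed.

Lemma far_repr (K : set Q) q : closed K -> ~ K q ->
  \forall eps \near (0 : R)^'+, forall y, K (pi y) -> ~ ball y eps (repr q).
Proof.
move=> cK nKq; have cKpre : closed (pi @^-1` K) by rewrite -closed_realization.
have cq := @accessible_closed_set1 _ (hausdorff_accessible hV) (repr q).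
have Kq0 : pi @^-1` K `&` [set repr q] = set0.
  by apply/seteqP; split=> // y [Ky yq]; apply: nKq; rewrite -(reprK q) -yq.
by apply: filterS (closed_disjoint_far cV cKpre cq Kq0) => eps far y Ky; exact: far.
Qed.

Lemma saturated_open_nbhs (U : set V) x : open U -> E x `<=` U ->
  exists S, [/\ open S, S x, S `<=` U & saturated S].
Proof.
move=> oU xU; exists (~` [set y | exists2 u, (~` U) u & E u y]); split.
- apply: closed_openC; apply: closed_rel_image => //; exact: open_closedC.
- by move=> [u nUu Eux]; apply/nUu/xU/Es.
- by move=> y Sy; apply: contrapT => nUy; apply: Sy; exists y.
- by move=> a b Sa Eab [u nUu Eub]; apply: Sa; exists u => //; exact: Et Eub (Es Eab).
Qed.

Lemma realization_hausdorff : hausdorff_space Q.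
Proof.
rewrite open_hausdorff => p q pq; pose x := repr p; pose z := repr q.
have nExz : ~ E x z by move/piP; rewrite !reprK => pq'; rewrite pq' eqxx in pq.
have xz0 : E x `&` E z = set0.
  by apply/seteqP; split=> // w [Exw Ezw]; apply/nExz/(Et Exw)/Es.
have [U [W [oU oW xU zW UW0]]] :=
  (@normal_openP R V).1 pseudometric_normal _ _ (@closed_class x) (@closed_class z) xz0.
have [S [oS Sx SU Ssat]] := saturated_open_nbhs oU xU.
have [S' [oS' S'z S'W S'sat]] := saturated_open_nbhs oW zW.
exists (pi @` S, pi @` S'); first by split; apply/mem_set; [exists x | exists z]; rewrite ?reprK.
split=> /=; first by apply/open_realization; rewrite preimage_image_pi.
  by apply/open_realization; rewrite preimage_image_pi.
apply/eqP/seteqP; split=> // _ [[a Sa <-] [b S'b /piP Eba]].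
have : (U `&` W) b by split; [exact/SU/(Ssat a)/Es | exact: S'W].
by rewrite UW0.
Qed.

Lemma realization_compact : compact [set: Q].
Proof.
have -> : [set: Q] = pi @` setT.
  by apply/seteqP; split=> // q _; exists (repr q); rewrite ?reprK.
by apply: continuous_compact => //; apply: continuous_subspaceT; exact: pi_continuous.
Qed.

Lemma realization_preimage_gconnected (K : set Q) : closed K -> connected K ->
  gconnected closed E (pi @^-1` K).
Proof.
move=> cK Kconn [P [P' [[PP' PP'0 [p Pp] [q P'q]] [[C cC PC] [C' cC' P'C'] noE]]]].
have cKpre : closed (pi @^-1` K) by rewrite -closed_realization.
have part_saturated (S S' : set V) : S `|` S' = pi @^-1` K ->
    (forall a b, S a -> S' b -> ~ E a b) -> saturated S.
  move=> SS' noE' a b Sa Eab.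
  have : (pi @^-1` K) b by apply: (@saturated_preimage K a) Eab; rewrite -SS'; left.
  by rewrite -SS' => -[//|S'b]; case: (noE' a b Sa S'b Eab).
have Psat := part_saturated P P' PP' noE.
have P'sat : saturated P'.
  by apply: (part_saturated P' P); rewrite 1?setUC // => a b P'a Pb /Es; exact: noE.
have PP'K a : (P `|` P') a -> K (pi a) by rewrite PP'.
have disj a : P a -> ~ P' a by move=> Pa P'a; have : (P `&` P') a by []; rewrite PP'0.
have PK : pi @` P = K.
  apply: Kconn; first by exists (pi p), p.
    exists (~` (pi @` P')).
      apply: closed_openC; apply/closed_realization.
      by rewrite preimage_image_pi // P'C'; exact: closedI.
    apply/seteqP; split=> [_ [a Pa <-]|r [Kr nP'r]].
      split; last by move/(image_piP _ P'sat); exact: disj.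
      by apply: PP'K; left.
    rewrite -(reprK r) in Kr nP'r *; have : (P `|` P') (repr r) by rewrite PP'.
    by case=> [|P'r]; [exists (repr r) | case: nP'r; exists (repr r)].
  exists (pi @` P); last first.
    by apply/seteqP; split=> [_ [a Pa <-]|r []//]; split; [apply: PP'K; left | exists a].
  by apply/closed_realization; rewrite preimage_image_pi // PC; exact: closedI.
have : (pi @` P) (pi q) by rewrite PK; apply: PP'K; right.
by move/(image_piP _ Psat)/disj.
Qed.

End Realization.

Section ProjectiveFraisseLimit.
Variables (R : realType) (V : pseudoMetricType R) (E : V -> V -> Prop).
Hypothesis hG : is_G E.

Local Notation Q := (realization E).
Local Notation pi := (\pi_Q : V -> Q).

Lemma G_top_graph : [/\ compact [set: V], hausdorff_space V,
  closed [set p : V * V | E p.1 p.2], (forall x, E x x) & (forall x y, E x y -> E y x)].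
Proof.
have [[[cV _ zV] [cE Er Es]] _ _ _] := hG.
by split=> //; exact: zero_dimensional_hausdorff.
Qed.

Lemma G_fine_map (F : R -> Prop) : (\forall eps \near (0 : R)^'+, F eps) ->
  exists (T : finType) (e : rel T) (f : V -> T),
    [/\ fin_conn_graph e, conf_epi_top E e f &
        exists2 eps, F eps & forall x y, f x = f y -> ball x eps y].
Proof.
move=> Fnear; have [_ _ _ fine] := hG.
have [eps [eps0 Feps]] := filter_ex (filterI (nbhs_right_gt (0 : R)) Fnear).
have [T [e [f [econn fconf ffib]]]] := fine eps eps0.
by exists T, e, f; split=> //; exists eps.
Qed.

Lemma G_double_lift (T : finType) (e : rel T) (f : V -> T) keep link :
  fin_conn_graph e -> conf_epi_top E e f ->
  (forall i, symmetric (keep i)) -> (forall i, reflexive (keep i)) ->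
  (forall i p q, e p q -> keep i p q || link p && keep (~~ i) p q) ->
  (exists p, link p) ->
  exists h : V -> T * bool, conf_epi_top E (double e keep link) h /\ f = fst \o h.
Proof.
move=> econn fconf ksym krefl kcov link0; have [_ _ amalg _] := hG.
apply: (amalg _ _ e (double e keep link) f fst econn) fconf _.
  exact: double_fin_conn.
exact: double_conf.
Qed.

Lemma G_rel_trans x y z : E x y -> E y z -> E x z.
Proof.
have [_ _ cE _ _] := G_top_graph.
move=> Exy Eyz; apply: contrapT => nExz.
have [T [e [f [econn fconf [eps far ffib]]]]] := G_fine_map (not_rel_near cE nExz).
have [[_ e_refl esym _] [_ [fE _ fEsurj] _]] := (econn, fconf).
set a := f x; set b := f y; set c := f z.
have nEac : ~~ e a c.
  apply/negP => /fEsurj[p [q [Epq fp fq]]].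
  by apply: (far p q) Epq; apply: ffib; rewrite ?fp ?fq.
have ab : a != b by apply: contraNneq nEac => ->; exact: fE.
have bc : b != c by apply: contraNneq nEac => <-; exact: fE.
have ac : a != c by apply: contraNneq nEac => ->; exact: e_refl.
pose keep (i : bool) p q := (p == q) || (p != if i then a else c) && (q != if i then a else c).
have ksym i : symmetric (keep i) by move=> p q; rewrite /keep eq_sym andbC.
have krefl i : reflexive (keep i) by move=> p; rewrite /keep eqxx.
have kcov i p q : e p q -> keep i p q || predT p && keep (~~ i) p q.
  move=> epq; suff : keep true p q || keep false p q by case: i => //=; rewrite orbC.
  rewrite /keep; case: eqP => //= _; apply: contraLR epq.
  rewrite negb_or !negb_and !negbK => /andP[/orP[/eqP-> | /eqP->]] /orP[/eqP|/eqP].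
  - by move/eqP: ac.
  - by move=> ->.
  - by move=> ->; rewrite esym.
  - by move: ac => /[swap] ->; rewrite eqxx.
have [h [[_ [hE _ _] _] fh]] := G_double_lift econn fconf ksym krefl kcov (ex_intro _ a isT).
have hfst w : (h w).1 = f w by rewrite fh.
have := double_edge_layer (hE _ _ Exy); rewrite !hfst => /(_ ab)[ixy].
have := double_edge_layer (hE _ _ Eyz); rewrite !hfst => /(_ bc)[_].
rewrite -ixy -/a -/b -/c /keep (negPf ab) (negPf bc).
by case: (h x).2; rewrite /= eqxx ?andbF.
Qed.

Lemma realization_neq0 : [set: Q] !=set0.
Proof.
have [T [e [f [[T0 _ _ _] [_ [_ fsurj _] _] _]]]] := G_fine_map (@filterT _ _ _).
by have [t _] := card_gt0P T0; have [x _] := fsurj t; exists (pi x).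
Qed.

Lemma realization_connected : connected [set: Q].
Proof.
have [cV hV cE Er Es] := G_top_graph; have Et := G_rel_trans.
move=> C [q0 Cq0] [U oU]; rewrite setTI => CU [W cW]; rewrite setTI => CW.
apply: contrapT => /eqP/setTPn[q nCq]; pose P := pi @^-1` C.
have cP : closed P by rewrite /P CW -closed_realization.
have cP' : closed (~` P) by apply: open_closedC; rewrite /P CU.
have [T [e [f [econn [_ [_ _ fEsurj] _] [eps far ffib]]]]] :=
  G_fine_map (closed_disjoint_far cV cP cP' (setICr P)).
have fibP u v : P u -> f u = f v -> P v.
  by move=> Pu fuv; apply: contrapT => nPv; apply: (far u v Pu nPv); exact: ffib.
have [_ _ _ /gconnected_discreteP Tmin] := econn.
have fPT : f @` P = setT.
  apply: Tmin => //; first by exists (f (repr q0)), (repr q0); rewrite /P ?preimage_repr.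
  move=> _ t [b Pb <-] _ /fEsurj[u [w [Euw fu fw]]]; exists w => //.
  by apply: (saturated_preimage Er Es Et _ Euw); apply: fibP Pb _; rewrite fu.
have [b Pb /(fibP b _ Pb)] : (f @` P) (f (repr q)) by rewrite fPT.
by rewrite /P preimage_repr.
Qed.

Lemma realization_indecomposable (A B : set Q) : subcontinuum A -> subcontinuum B ->
  A `|` B = [set: Q] -> A = [set: Q] \/ B = [set: Q].
Proof.
have [cV hV cE Er Es] := G_top_graph; have Et := G_rel_trans.
have hQ : hausdorff_space Q by exact: realization_hausdorff.
move=> [_ cpA cnA] [_ cpB _] AB.
apply: contrapT => /not_orP[/eqP/setTPn[qa nAqa] /eqP/setTPn[qb nBqb]].
have farA := far_repr cV hV (compact_closed hQ cpA) nAqa.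
have farB := far_repr cV hV (compact_closed hQ cpB) nBqb.
have [T [e [f [econn fconf [eps [{}farA {}farB] ffib]]]]] := G_fine_map (filterI farA farB).
have [h [[hcont [hE hsurj _] _] fh]] := @G_double_lift T e f (fun _ _ _ => true)
  (pred1 (f (repr qa))) econn fconf (fun _ _ _ => erefl) (fun _ _ => isT)
  (fun _ _ _ _ => isT) (ex_intro _ (f (repr qa)) (eqxx _)).
have hfst w : (h w).1 = f w by rewrite fh.
have Aconn : gconnected closed E (pi @^-1` A).
  by apply: realization_preimage_gconnected => //; exact: compact_closed.
have over_qb i : (h @` (pi @^-1` A)) (f (repr qb), i).
  have [w hw] := hsurj (f (repr qb), i); exists w => //.
  have : (A `|` B) (pi w) by rewrite AB.
  by case=> // /farB; case; apply: ffib; rewrite -hfst hw.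
apply: (gconnected_image hcont hE Aconn); apply: double_layers_gdisconnected.
- move=> _ [y Ay <-]; rewrite hfst; apply/eqP => fy.
  by apply: (farA y Ay); apply: ffib; rewrite fy.
- by exists (f (repr qb), true).
- by exists (f (repr qb), false).
Qed.

End ProjectiveFraisseLimit.

Theorem mainTheorem7 (R : realType) (V : pseudoMetricType R)
    (E : V -> V -> Prop) :
  is_G E -> indecomposable_continuum (realization E).
Proof.
move=> hG; have [cV hV cE Er Es] := G_top_graph hG; have Et := G_rel_trans hG.
split; first split.
- exact: realization_hausdorff.
- exact: realization_neq0.
- exact: realization_compact.
- exact: realization_connected.
- exact: realization_indecomposable.
Qed.
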